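(* For $n\ge 1$, the friendship graph $F_n$ satisfies $\nu^*(F_n)=17n^2+n$.
   Context: For a finite simple graph $G=(V,E)$ with $\ell=|V|+|E|$, a construction sequence (c-sequence) is a bijection $x:\{1,\dots,\ell\}\to V\sqcup E$ such that every edge $e=uw$ satisfies $x^{-1}(e)>\max\{x^{-1}(u),x^{-1}(w)\}$. The cost of $x$ is $\nu(x)=\sum_{e=uw\in E}\big(2x^{-1}(e)-x^{-1}(u)-x^{-1}(w)\big)$, and $\nu^*(G)$ is the maximum of $\nu(x)$ over all c-sequences for $G$. The friendship graph $F_n$ is the wedge of $n$ triangles sharing exactly one common vertex (so it has $2n+1$ vertices and $3n$ edges). *)

From mathcomp Require Import all_boot.
Set Implicit Arguments. Unset Strict Implicit. Unset Printing Implicit Defensive.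

Definition simple_graph (T : finType) (e : rel T) : Prop :=
  symmetric e /\ irreflexive e.

Definition edge_set (T : finType) (e : rel T) : {set {set T}} :=
  [set s : {set T} | [exists u, exists w, e u w && (s == [set u; w])]].

Definition Edge (T : finType) (e : rel T) := {s : {set T} | s \in edge_set e}.

Definition Elt (T : finType) (e : rel T) := (T + Edge e)%type.

Definition ell (T : finType) (e : rel T) : nat := #|{: Elt e}|.

(* A construction sequence is a bijection x : {1..ell} -> V ⊔ E; we record
   it through its inverse p = x^{-1}, an (injective, hence bijective) map
   V ⊔ E -> 'I_ell, with 1-based position (p y).+1. *)
Definition pos (T : finType) (e : rel T) (p : {ffun Elt e -> 'I_(ell e)})
  (y : Elt e) : nat := (p y).+1.

Definition is_cseq (T : finType) (e : rel T) (p : {ffun Elt e -> 'I_(ell e)}) : bool :=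
  injectiveb p &&
  [forall s : Edge e, forall u : T,
     (u \in val s) ==> (pos p (inl u) < pos p (inr s))].

(* cost nu(x) = sum over edges e = uw of (2 x^{-1}(e) - x^{-1}(u) - x^{-1}(w))
   = sum over edges s, sum over endpoints u of s, of (pos s - pos u)
   (each term is positive for a c-sequence, so truncated subtraction is exact). *)
Definition cost (T : finType) (e : rel T) (p : {ffun Elt e -> 'I_(ell e)}) : nat :=
  \sum_(s : Edge e) \sum_(u in val s) (pos p (inr s) - pos p (inl u)).

Definition nu_star (T : finType) (e : rel T) : nat :=
  \max_(p : {ffun Elt e -> 'I_(ell e)} | is_cseq p) cost p.

(* Friendship graph F_n on vertices 'I_(2n+1): center 0, triangles
   {0, 2i+1, 2i+2} for i < n. *)
Definition friendship_rel (n : nat) : rel 'I_(2 * n + 1) :=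
  fun u v => (u != v) &&
    [|| val u == 0, val v == 0 | (val u).-1./2 == (val v).-1./2].
Arguments friendship_rel n : clear implicits.

Lemma friendship_simple (n : nat) : simple_graph (friendship_rel n).
Proof.
split.
- move=> u v; rewrite /friendship_rel eq_sym; congr (_ && _).
  by case: (val u == 0); case: (val v == 0); rewrite //= eq_sym.
- by move=> u; rewrite /friendship_rel eqxx.
Qed.

From mathcomp Require Import all_boot zify.

Set Implicit Arguments.
Unset Strict Implicit.
Unset Printing Implicit Defensive.

(* The cost of a c-sequence is 2 (sum of edge positions) minus the sum of
   deg(v) pos(v) over the vertices.  All positions together are 1, ..., ell,
   so the edge positions can be eliminated: for F_n, with c the position of
   the centre and V the sum of all vertex positions,
     cost = (5n+2)(5n+1) - 4V - (2n-2)c.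
   Distinct positive positions give 2V >= (2n+1)(2n+2), and c >= 1; both
   bounds are attained by listing the centre, then the other vertices, then
   the edges. *)

Lemma bin2S m : 'C(m.+1, 2) = 'C(m, 2) + m.
Proof. by rewrite binS bin1. Qed.

Lemma double_bin2 m : 2 * 'C(m, 2) = m * m.-1.
Proof. by elim: m => // m IH; rewrite bin2S mulnDr IH; case: m {IH}; nia. Qed.

Lemma bin2_size_le_sumn (s : seq nat) : uniq s -> 'C(size s, 2) <= sumn s.
Proof.
have sort_s : perm_eq (sort geq s) s by rewrite perm_sort.
rewrite -(perm_size sort_s) -(perm_sumn sort_s) -(perm_uniq sort_s).
have : sorted geq (sort geq s) by apply: sort_sorted => a b; exact: leq_total.
elim: (sort geq s) => // m r IH /= r_path /andP[m_notin_r r_uniq].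
have r_le_m : all (geq m) r.
  by apply: order_path_min r_path => y x z xy yz; exact: leq_trans yz xy.
have size_r : size r <= m.
  rewrite -(size_iota 0 m); apply: uniq_leq_size => // x x_in_r.
  rewrite mem_iota add0n ltn_neqAle [x <= m](allP r_le_m x x_in_r) andbT.
  by apply: contraNneq m_notin_r => <-.
by rewrite /= bin2S addnC leq_add // IH // (path_sorted r_path).
Qed.

Lemma bin2_card_le_sum_inj (A : finType) (f : A -> nat) :
  injective f -> 'C(#|A|, 2) <= \sum_(a : A) f a.
Proof.
move=> f_inj; have : uniq (map f (enum A)) by rewrite map_inj_uniq // enum_uniq.
move/bin2_size_le_sumn.
by rewrite size_map -cardE sumnE big_map big_enum.
Qed.

Lemma sum_inj_ord (A : finType) (f : A -> 'I_#|A|) :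
  injective f -> \sum_(a : A) f a = 'C(#|A|, 2).
Proof.
move=> f_inj; have f_bij : bijective f by apply: inj_card_bij; rewrite ?card_ord.
by rewrite -bin2_sum big_mkord (reindex f) //; exact: onW_bij.
Qed.

Section Graphs.
Variables (T : finType) (e : rel T).

Lemma edge_setP (S : {set T}) :
  reflect (exists u w, e u w /\ S = [set u; w]) (S \in edge_set e).
Proof.
rewrite inE; apply: (iffP existsP) => [[u /existsP[w /andP[euw /eqP ->]]]|].
  by exists u, w.
by case=> u [w [euw ->]]; exists u; apply/existsP; exists w; rewrite euw eqxx.
Qed.

Definition deg (u : T) : nat := #|[set s : Edge e | u \in val s]|.

Lemma sum_edge_endpoints (F : T -> nat) :
  \sum_(s : Edge e) \sum_(u in val s) F u = \sum_(u : T) deg u * F u.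
Proof.
rewrite (exchange_big_dep predT) //=; apply: eq_bigr => u _.
by rewrite -sum_nat_const; apply: eq_bigl => s; rewrite inE.
Qed.

Hypothesis e_irr : irreflexive e.

Lemma card_edge (s : Edge e) : #|val s| = 2.
Proof.
have /edge_setP[u [w [euw ->]]] := valP s.
have u_neq_w : u != w by apply: contraTneq euw => ->; rewrite e_irr.
by rewrite cards2 u_neq_w.
Qed.

Lemma handshake : 2 * #|{: Edge e}| = \sum_(u : T) deg u.
Proof.
rewrite (eq_bigr (fun u => deg u * 1)) => [|u _]; last by rewrite muln1.
rewrite -(sum_edge_endpoints (fun _ => 1)) mulnC -sum_nat_const.
by apply: eq_bigr => s _; rewrite sum1_card card_edge.
Qed.

Hypothesis e_sym : symmetric e.

Lemma deg_card_neighbours (u : T) : deg u = #|[set w | e u w]|.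
Proof.
have -> : deg u = #|[set S in edge_set e | u \in S]|.
  rewrite /deg -(card_imset _ val_inj); apply: eq_card => S; rewrite [in RHS]inE.
  apply/imsetP/andP => [[s]|[S_edge u_in_S]].
    by rewrite inE => u_in_s ->; split=> //; exact: valP.
  by exists (Sub S S_edge); rewrite ?inE SubK.
have -> : [set S in edge_set e | u \in S] = [set [set u; w] | w in [set w | e u w]].
  apply/setP => S; rewrite inE; apply/andP/imsetP => [[/edge_setP[a [b [eab ->]]]]|[w]].
    rewrite !inE => /orP[]/eqP ->; first by exists b; rewrite ?inE.
    by exists a; rewrite ?inE 1?e_sym // setUC.
  rewrite inE => euw ->; split; last by rewrite !inE eqxx.
  by apply/edge_setP; exists u, w.
apply: card_in_imset => w1 w2; rewrite !inE => euw1 euw2 eq_edges.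
have : w1 \in [set u; w2] by rewrite -eq_edges !inE eqxx orbT.
by rewrite !inE => /orP[/eqP w1u|/eqP //]; rewrite w1u e_irr in euw1.
Qed.

End Graphs.

Section CSequences.
Variables (T : finType) (e : rel T).
Implicit Type p : {ffun Elt e -> 'I_(ell e)}.

Lemma sum_pos p : injectiveb p -> \sum_(y : Elt e) pos p y = 'C((ell e).+1, 2).
Proof.
move=> /injectiveP p_inj; rewrite /pos; under eq_bigr do rewrite -addn1.
by rewrite big_split sum1_card /= (sum_inj_ord p_inj) bin2S.
Qed.

Lemma sum_pos_inl p :
  \sum_(u : T) pos p (inl u) = \sum_(u : T) p (inl u) + #|T|.
Proof. by rewrite /pos; under eq_bigr do rewrite -addn1; rewrite big_split sum1_card. Qed.

Lemma bin2_le_sum_pos_inl p :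
  injectiveb p -> 'C(#|T|.+1, 2) <= \sum_(u : T) pos p (inl u).
Proof.
move=> /injectiveP p_inj.
have pinl_inj : injective (fun u : T => val (p (inl u))).
  by move=> u w /val_inj /p_inj [].
by rewrite sum_pos_inl bin2S leq_add2r (bin2_card_le_sum_inj pinl_inj).
Qed.

Lemma cost_vertex_positions p : irreflexive e -> is_cseq p ->
  cost p + \sum_(u : T) deg e u * pos p (inl u) + 2 * \sum_(u : T) pos p (inl u)
  = 2 * 'C((ell e).+1, 2).
Proof.
move=> e_irr /andP[p_inj /'forall_forallP p_cseq].
have cost_eq : cost p + \sum_(s : Edge e) \sum_(u in val s) pos p (inl u)
               = 2 * \sum_(s : Edge e) pos p (inr s).
  rewrite /cost -big_split big_distrr; apply: eq_bigr => s _ /=.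
  rewrite -big_split (eq_bigr (fun _ => pos p (inr s))) => [|u u_in_s].
    by rewrite sum_nat_const card_edge // mulnC.
  by apply: subnK; apply: ltnW; exact: (implyP (p_cseq s u)).
rewrite sum_edge_endpoints in cost_eq.
by rewrite cost_eq -mulnDr -(sum_pos p_inj) big_sumType addnC.
Qed.

Definition vertices_first_pos (y : Elt e) : nat :=
  match y with inl u => enum_rank u | inr s => #|T| + enum_rank s end.

Lemma vertices_first_pos_lt y : vertices_first_pos y < ell e.
Proof.
rewrite /ell card_sum; case: y => [u|s] /=; first exact: ltn_addr.
by rewrite ltn_add2l.
Qed.

Definition vertices_first : {ffun Elt e -> 'I_(ell e)} :=
  [ffun y => Ordinal (vertices_first_pos_lt y)].

Lemma vertices_first_cseq : is_cseq vertices_first.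
Proof.
apply/andP; split.
  apply/injectiveP => [[u1|s1] [u2|s2]]; rewrite !ffunE => /(congr1 val) /=.
  - by move/val_inj/enum_rank_inj ->.
  - by move=> eq_pos; have := ltn_ord (enum_rank u1); rewrite eq_pos ltnNge leq_addr.
  - by move=> eq_pos; have := ltn_ord (enum_rank u2); rewrite -eq_pos ltnNge leq_addr.
  - by move/addnI/val_inj/enum_rank_inj ->.
apply/'forall_forallP => s u; apply/implyP => _.
by rewrite /pos !ffunE ltnS /= ltn_addr.
Qed.

Lemma sum_pos_inl_vertices_first :
  \sum_(u : T) pos vertices_first (inl u) = 'C(#|T|.+1, 2).
Proof.
rewrite sum_pos_inl bin2S -(sum_inj_ord (@enum_rank_inj T)).
by congr (_ + _); apply: eq_bigr => u _; rewrite ffunE.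
Qed.

End CSequences.

Lemma same_triangle a b : 0 < a -> 0 < b -> a != b ->
  (a.-1./2 == b.-1./2) = (b == if odd a then a.+1 else a.-1).
Proof. by move=> a_pos b_pos a_neq_b; apply/eqP/eqP; case: ifP => a_odd; lia. Qed.

Section Friendship.
Variable n : nat.
Local Notation F := (friendship_rel n).

Let F_sym : symmetric F := (friendship_simple n).1.
Let F_irr : irreflexive F := (friendship_simple n).2.

Definition center : 'I_(2 * n + 1) := Ordinal (ltn_addl (2 * n) (ltnSn 0)).

Lemma partner_lt (u : 'I_(2 * n + 1)) : (if odd u then u.+1 else u.-1) < 2 * n + 1.
Proof. by case: ifP => u_odd; have := ltn_ord u; lia. Qed.

(* Leaves 2i+1 and 2i+2 are partners: with the centre they span the i-th triangle. *)
Definition partner (u : 'I_(2 * n + 1)) : 'I_(2 * n + 1) := Ordinal (partner_lt u).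

Lemma friendship_neighbours_center : [set w | F center w] = [set~ center].
Proof. by apply/setP => w; rewrite !inE /friendship_rel /= andbT eq_sym. Qed.

Lemma friendship_neighbours_leaf u :
  u != center -> [set w | F u w] = [set center; partner u].
Proof.
rewrite -val_eqE /= -lt0n => u_pos; apply/setP => w.
rewrite !inE /friendship_rel -!val_eqE /= (gtn_eqF u_pos) /=.
have [-> | w_pos] := posnP w; first by rewrite -lt0n u_pos.
have [<- | u_neq_w] := eqVneq (val u) w.
  by rewrite eqxx /=; apply/esym/eqP; case: ifP; lia.
by rewrite same_triangle.
Qed.

Lemma friendship_deg_center : deg F center = 2 * n.
Proof.
rewrite deg_card_neighbours // friendship_neighbours_center cardsC1 card_ord.
by rewrite addn1.
Qed.

Lemma friendship_deg_leaf u : u != center -> deg F u = 2.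
Proof.
move=> u_leaf; rewrite deg_card_neighbours // friendship_neighbours_leaf //.
move: u_leaf; rewrite cards2 -!val_eqE /=.
by case: ifP => u_odd; lia.
Qed.

Lemma friendship_sum_deg (G : 'I_(2 * n + 1) -> nat) :
  \sum_u deg F u * G u + 2 * G center = 2 * n * G center + 2 * \sum_u G u.
Proof.
rewrite (bigD1 center) //= [in RHS](bigD1 center) //= friendship_deg_center mulnDr.
rewrite (eq_bigr (fun u => 2 * G u)) => [|u u_leaf]; last by rewrite friendship_deg_leaf.
by rewrite -big_distrr /= -addnA [_ + 2 * G center]addnC.
Qed.

Lemma friendship_card_edges : #|{: Edge F}| = 3 * n.
Proof.
have := friendship_sum_deg (fun _ => 1); rewrite sum1_card card_ord.
under eq_bigr do rewrite muln1.
by rewrite -handshake //; lia.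
Qed.

Lemma friendship_ell : ell F = 5 * n + 1.
Proof. by rewrite /ell card_sum card_ord friendship_card_edges; lia. Qed.

Lemma friendship_cost (p : {ffun Elt F -> 'I_(ell F)}) : is_cseq p ->
  cost p + 2 * n * pos p (inl center) + 4 * \sum_u pos p (inl u)
  = (5 * n + 2) * (5 * n + 1) + 2 * pos p (inl center).
Proof.
move=> p_cseq; have := cost_vertex_positions F_irr p_cseq.
have := friendship_sum_deg (fun u => pos p (inl u)).
rewrite friendship_ell double_bin2 /=.
set c := pos p (inl center); set V := \sum_u pos p (inl u).
set D := \sum_u deg F u * pos p (inl u).
lia.
Qed.

Lemma friendship_cost_le (p : {ffun Elt F -> 'I_(ell F)}) :
  is_cseq p -> cost p <= 17 * n ^ 2 + n.
Proof.
move=> p_cseq; have := friendship_cost p_cseq.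
have := bin2_le_sum_pos_inl (andP p_cseq).1.
rewrite card_ord -(leq_pmul2l (isT : 0 < 2)) double_bin2 /=.
have : pos p (inl center) <= \sum_u pos p (inl u) by rewrite (bigD1 center) ?leq_addr.
have : 0 < pos p (inl center) by [].
set c := pos p (inl center); set V := \sum_u pos p (inl u).
nia.
Qed.

Lemma friendship_cost_vertices_first : cost (vertices_first F) = 17 * n ^ 2 + n.
Proof.
have := friendship_cost (vertices_first_cseq F).
have -> : pos (vertices_first F) (inl center) = 1 by rewrite /pos ffunE /= enum_rank_ord.
rewrite sum_pos_inl_vertices_first card_ord.
have := double_bin2 (2 * n + 1).+1.
nia.
Qed.

End Friendship.

Theorem theorem15 (n : nat) : 1 <= n ->
  nu_star (friendship_rel n) = 17 * n ^ 2 + n.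
Proof.
move=> _; apply/eqP; rewrite eqn_leq; apply/andP; split.
  by apply/bigmax_leqP => p; exact: friendship_cost_le.
rewrite -{1}(friendship_cost_vertices_first n).
exact: leq_bigmax_cond (vertices_first_cseq _).
Qed.
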